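(* Let $F$ be a free non-abelian group and let $\mathcal K$ be the class of coordinate groups $F_{R(U)}$ of finite systems $U(X)=1$ over $F$ such that every equation $T(X,Y)=1$ over $F$ compatible with $U=1$ admits a $U$-lift. Let $G=F_{R(S)}\in\mathcal K$ and let $H$ be a finitely generated subgroup of $G$ with $F\le H$ such that there is a retraction $\phi:G\to H$ (a homomorphism with $\phi|_H=\mathrm{id}_H$). Then $H=F_{R(U)}$ for some finite system $U=1$ over $F$ and every equation compatible with $U=1$ admits a $U$-lift; in particular $H\in\mathcal K$.
   Context: $F[X]=F*F(X)$; $R(U)$ is the intersection of kernels of all $F$-homomorphisms $F[X]\to F$ killing $U$; $F_{R(U)}=F[X]/R(U)$ with canonical map $\mu:X\to F_{R(U)}$. $T(X,Y)=1$ is compatible with $U=1$ if for every solution $X_0$ of $U=1$ in $F$, $T(X_0,Y)=1$ has a solution in $F$; it admits a $U$-lift if $T(X^\mu,Y)=1$ has a solution in $F_{R(U)}$. *)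

(* Free groups are modelled concretely by words over letters
   (generator, inverted?) up to free reduction. *)
From mathcomp Require Import all_boot.
Set Implicit Arguments. Unset Strict Implicit. Unset Printing Implicit Defensive.

(* A word over a set V of generators: letters (v, b), b = true means v^-1. *)
Definition word (V : Type) := seq (V * bool).

Definition inv_word (V : Type) (w : word V) : word V :=
  rev (map (fun l => (l.1, ~~ l.2)) w).

Definition push (V : eqType) (l : V * bool) (s : word V) : word V :=
  match s with
  | l' :: s' => if (l'.1 == l.1) && (l'.2 == ~~ l.2) then s' else l :: s
  | [::] => [:: l]
  end.

(* the freely reduced form; two words are equal in the free group on V iff
   their reduced forms coincide *)
Definition reduce (V : eqType) (w : word V) : word V := foldr (@push V) [::] w.

Definition wsubst (V W : Type) (f : V -> word W) (w : word V) : word W :=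
  flatten (map (fun l => if l.2 then inv_word (f l.1) else f l.1) w).

(* F = free group on A;  F[X] = F * F(X) = free group on A + X. *)
Definition cst (A V : Type) (a : A) : word (A + V) := [:: (inl a, false)].

Definition fsub (A V W : Type) (f : V -> word (A + W)) : word (A + V) -> word (A + W) :=
  wsubst (fun c => match c with inl a => [:: (inl a, false)] | inr v => f v end).

Definition eval (A V : Type) (s : V -> word A) : word (A + V) -> word A :=
  wsubst (fun c => match c with inl a => [:: (a, false)] | inr v => s v end).

Definition is_solution (A : eqType) (V : eqType) (U : seq (word (A + V)))
  (s : V -> word A) : Prop :=
  forall u, u \in U -> reduce (eval s u) = [::].

Definition inR (A : eqType) (V : eqType) (U : seq (word (A + V))) (w : word (A + V)) : Prop :=
  forall s, is_solution U s -> reduce (eval s w) = [::].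

(* equality in F_{R(U)} = F[V]/R(U) *)
Definition eqR (A : eqType) (V : eqType) (U : seq (word (A + V))) (w w' : word (A + V)) : Prop :=
  inR U (w ++ inv_word w').

Definition pairmap (A X Y : Type) (s : X -> word A) (t : Y -> word A) : X + Y -> word A :=
  fun c => match c with inl x => s x | inr y => t y end.

Definition compatible (A : eqType) (n m : nat) (U : seq (word (A + 'I_n)))
  (T : word (A + ('I_n + 'I_m))) : Prop :=
  forall s : 'I_n -> word A, is_solution U s ->
    exists t : 'I_m -> word A, reduce (eval (pairmap s t) T) = [::].

(* T(X^mu, Y) = 1 has a solution in F_{R(U)}: Y := W (representatives in F[X]) *)
Definition admits_lift (A : eqType) (n m : nat) (U : seq (word (A + 'I_n)))
  (T : word (A + ('I_n + 'I_m))) : Prop :=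
  exists W : 'I_m -> word (A + 'I_n),
    inR U (fsub (fun c => match c with
                          | inl i => [:: (inr i, false)]
                          | inr j => W j end) T).

Definition lift_property (A : eqType) (n : nat) (U : seq (word (A + 'I_n))) : Prop :=
  forall m (T : word (A + ('I_n + 'I_m))), compatible U T -> admits_lift U T.

Definition inH (A : eqType) (V : eqType) (S : seq (word (A + V))) (k : nat)
  (g : 'I_k -> word (A + V)) (w : word (A + V)) : Prop :=
  exists v : word 'I_k, eqR S (wsubst g v) w.

(* phi (given on the generators A + X of F_{R(S)}) defines a homomorphism
   F_{R(S)} -> H which is the identity on H *)
Definition is_retraction (A : eqType) (n k : nat) (S : seq (word (A + 'I_n)))
  (g : 'I_k -> word (A + 'I_n)) (phi : A + 'I_n -> word (A + 'I_n)) : Prop :=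
  [/\ (forall w, inR S w -> inR S (wsubst phi w)),
      (forall c, inH S g (phi c)) &
      (forall w, inH S g w -> eqR S (wsubst phi w) w)].

(* alpha (on the variables of F[X_l]) induces an F-isomorphism F_{R(U)} -> H *)
Definition F_iso_onto_H (A : eqType) (n k l : nat) (S : seq (word (A + 'I_n)))
  (g : 'I_k -> word (A + 'I_n)) (U : seq (word (A + 'I_l)))
  (alpha : 'I_l -> word (A + 'I_n)) : Prop :=
  [/\ (forall i, inH S g (alpha i)),
      (forall w, inR U w -> inR S (fsub alpha w)),
      (forall w, inR S (fsub alpha w) -> inR U w) &
      (forall h, inH S g h -> exists w, eqR S (fsub alpha w) h)].

(* Since phi is a retraction onto H and fixes F, H is presented by the system
   U = S u {x_i = phi(x_i)}: the solutions of U in F are exactly the solutions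
   s of S fixed by phi, i.e. those of the form s o phi, and x_i |-> phi(x_i)
   induces F_{R(U)} ~ H.  An equation T(X,Y) = 1 compatible with U yields
   T(phi(X),Y) = 1 compatible with S; its S-lift is a U-lift of T. *)
From Pilot Require Import Defs.
From mathcomp Require Import all_boot.
Set Implicit Arguments. Unset Strict Implicit. Unset Printing Implicit Defensive.

Section InverseWord.
Variable V : Type.

Definition inv_letter (l : V * bool) : V * bool := (l.1, ~~ l.2).

Lemma inv_word_cat (x y : word V) : inv_word (x ++ y) = inv_word y ++ inv_word x.
Proof. by rewrite /inv_word map_cat rev_cat. Qed.

Lemma inv_word_cons (l : V * bool) x : inv_word (l :: x) = inv_word x ++ [:: inv_letter l].
Proof. by rewrite -cat1s inv_word_cat. Qed.

Lemma inv_wordK : involutive (@inv_word V).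
Proof.
move=> x; rewrite /inv_word map_rev revK -map_comp.
by elim: x => //= [[v b] x] IH; rewrite negbK IH.
Qed.

End InverseWord.

Section FreeReduction.
Variable V : eqType.
Implicit Types (l : V * bool) (r s u x y : word V).

Fixpoint reduced s : bool :=
  if s is l :: s' then
    if s' is l' :: _ then ~~ ((l'.1 == l.1) && (l'.2 == ~~ l.2)) && reduced s'
    else true
  else true.

Lemma reduced_behead l s : reduced (l :: s) -> reduced s.
Proof. by case: s => //= l' s' /andP[]. Qed.

Lemma push_reduced l s : reduced s -> reduced (push l s).
Proof.
case: s => [|l' s'] //= Hs.
by case: ifP => C; [exact: reduced_behead Hs | rewrite /= C Hs].
Qed.

Lemma push_invK l s : reduced s -> push (inv_letter l) (push l s) = s.
Proof.
case: l => v b; case: s => [|[v' b'] s'] /=; first by rewrite negbK !eqxx.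
case: (v' =P v) => [->|_] /=; last by rewrite negbK !eqxx.
case: (b' =P ~~ b) => [->|_] /=; last by rewrite negbK !eqxx.
by case: s' => [|[v'' b''] s''] //= /andP[C _]; rewrite (negbTE C).
Qed.

Lemma foldr_push_reduced r u : reduced r -> reduced (foldr (@push V) r u).
Proof. by move=> Hr; elim: u => //= l u IH; apply: push_reduced. Qed.

Lemma reduce_reduced x : reduced (reduce x).
Proof. exact: foldr_push_reduced. Qed.

Lemma foldr_push_push l u r : reduced r ->
  foldr (@push V) r (push l u) = push l (foldr (@push V) r u).
Proof.
move=> Hr; case: u => [|l' u'] //=; case: ifP => C //=.
have -> : l = inv_letter l'.
  by case: l l' C => v b [v' b'] /= /andP[/eqP-> /eqP->]; rewrite /inv_letter /= negbK.
by rewrite push_invK // foldr_push_reduced.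
Qed.

Lemma foldr_push_reduce r x : reduced r ->
  foldr (@push V) r x = foldr (@push V) r (reduce x).
Proof. by move=> Hr; elim: x => //= l x IH; rewrite IH foldr_push_push. Qed.

Lemma reduce_cat_congr x x' y y' :
  reduce x = reduce x' -> reduce y = reduce y' -> reduce (x ++ y) = reduce (x' ++ y').
Proof.
move=> Hx Hy; rewrite /reduce !foldr_cat -/(reduce y) -/(reduce y') Hy.
by rewrite (foldr_push_reduce x (reduce_reduced y'))
           (foldr_push_reduce x' (reduce_reduced y')) -/(reduce x) Hx.
Qed.

Lemma reduce_cat_inv x : reduce (x ++ inv_word x) = [::].
Proof.
elim: x => // l x IH; rewrite inv_word_cons /= catA.
rewrite (@reduce_cat_congr _ [::] [:: inv_letter l] [:: inv_letter l]) //=.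
by case: l => v b /=; rewrite !eqxx.
Qed.

Lemma reduce_inv_cat x : reduce (inv_word x ++ x) = [::].
Proof. by rewrite -{2}(inv_wordK x) reduce_cat_inv. Qed.

Lemma reduce_inv_congr x x' :
  reduce x = reduce x' -> reduce (inv_word x) = reduce (inv_word x').
Proof.
move=> H; rewrite -[inv_word x]cats0.
transitivity (reduce (inv_word x ++ (x' ++ inv_word x'))).
  by apply: reduce_cat_congr; rewrite ?reduce_cat_inv.
rewrite catA (@reduce_cat_congr _ [::] (inv_word x') (inv_word x')) //.
by rewrite -(@reduce_cat_congr (inv_word x) _ x) ?reduce_inv_cat.
Qed.

Lemma reduce_cat_inv_nil x y : reduce (x ++ inv_word y) = [::] <-> reduce x = reduce y.
Proof.
split=> [H|H]; last by rewrite (@reduce_cat_congr _ y _ (inv_word y)) ?reduce_cat_inv.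
rewrite -[x]cats0 (@reduce_cat_congr _ x _ (inv_word y ++ y)) ?reduce_inv_cat //.
by rewrite catA (@reduce_cat_congr _ [::] y y).
Qed.

Lemma reduce_inv_cat_nil x y : reduce (inv_word x ++ y) = [::] <-> reduce x = reduce y.
Proof.
rewrite -[y in inv_word x ++ y]inv_wordK; apply: iff_trans (reduce_cat_inv_nil _ _) _.
by split=> /reduce_inv_congr; rewrite ?inv_wordK.
Qed.

End FreeReduction.

Lemma wsubst1 (V W : Type) (f : V -> word W) l :
  wsubst f [:: l] = if l.2 then inv_word (f l.1) else f l.1.
Proof. by rewrite /wsubst /= cats0. Qed.

Lemma wsubst_cat (V W : Type) (f : V -> word W) (x y : word V) :
  wsubst f (x ++ y) = wsubst f x ++ wsubst f y.
Proof. by rewrite /wsubst map_cat flatten_cat. Qed.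

Lemma wsubst_inv (V W : Type) (f : V -> word W) (x : word V) :
  wsubst f (inv_word x) = inv_word (wsubst f x).
Proof.
elim: x => // l x IH; rewrite -cat1s !inv_word_cat !wsubst_cat IH; congr (_ ++ _).
by case: l => v []; rewrite /= !wsubst1 /= ?inv_wordK.
Qed.

Lemma wsubst_comp (V W Z : Type) (f : V -> word W) (h : W -> word Z) (x : word V) :
  wsubst h (wsubst f x) = wsubst (fun c => wsubst h (f c)) x.
Proof.
elim: x => // l x IH; rewrite -cat1s !wsubst_cat IH; congr (_ ++ _).
by case: l => v []; rewrite !wsubst1 /= cats0 ?wsubst_inv.
Qed.

Lemma wsubst_congr (V : Type) (W : eqType) (f f' : V -> word W) w :
  (forall c, reduce (f c) = reduce (f' c)) -> reduce (wsubst f w) = reduce (wsubst f' w).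
Proof.
move=> H; elim: w => //= l w IH; apply: reduce_cat_congr => //.
by case: l.2; [apply: reduce_inv_congr|].
Qed.

Section Evaluation.
Variables (A : eqType) (V : Type).
Implicit Types (s : V -> word A) (w : word (A + V)).

Lemma eval_var s v : eval s [:: (inr v, false)] = s v.
Proof. by rewrite /eval wsubst1. Qed.

Lemma eval_congr s s' w :
  (forall v, reduce (s v) = reduce (s' v)) -> reduce (eval s w) = reduce (eval s' w).
Proof. by move=> H; apply: wsubst_congr; case. Qed.

Lemma eval_fsub (X : Type) s (f : X -> word (A + V)) (w : word (A + X)) :
  reduce (eval s (fsub f w)) = reduce (eval (fun x => eval s (f x)) w).
Proof. by rewrite /eval /fsub wsubst_comp; apply: wsubst_congr; case. Qed.

End Evaluation.

Section CoordinateGroup.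
Variables (A V : eqType) (S : seq (word (A + V))).

Lemma inR_mem u : u \in S -> inR S u.
Proof. by move=> uS s Hs; exact: Hs. Qed.

Lemma eqR_eval w w' s :
  eqR S w w' -> is_solution S s -> reduce (eval s w) = reduce (eval s w').
Proof.
by move=> E Hs; apply/reduce_cat_inv_nil; have := E s Hs; rewrite /eval wsubst_cat wsubst_inv.
Qed.

Lemma eqR_of_eval w w' :
  (forall s, is_solution S s -> reduce (eval s w) = reduce (eval s w')) -> eqR S w w'.
Proof.
by move=> E s Hs; rewrite /eval wsubst_cat wsubst_inv; apply/reduce_cat_inv_nil/E.
Qed.

End CoordinateGroup.

Definition retract_system (A : eqType) (n : nat) (S : seq (word (A + 'I_n)))
  (alpha : 'I_n -> word (A + 'I_n)) : seq (word (A + 'I_n)) :=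
  S ++ [seq [:: (inr i, true)] ++ alpha i | i <- enum 'I_n].

Lemma is_solution_retract_system (A : eqType) n S alpha (s : 'I_n -> word A) :
  is_solution (retract_system S alpha) s <->
  is_solution S s /\ forall i, reduce (s i) = reduce (eval s (alpha i)).
Proof.
have eval_eqn i : eval s ([:: (inr i, true)] ++ alpha i) = inv_word (s i) ++ eval s (alpha i).
  by rewrite /eval wsubst_cat wsubst1.
split=> [Hs | [HS Hfix] u].
  split=> [u uS | i]; first by apply: Hs; rewrite mem_cat uS.
  apply/reduce_inv_cat_nil; rewrite -eval_eqn; apply: Hs.
  by rewrite mem_cat; apply/orP; right; apply/mapP; exists i; rewrite ?mem_enum.
rewrite mem_cat => /orP[/HS // | /mapP[i _ ->]].
by rewrite eval_eqn; apply/reduce_inv_cat_nil.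
Qed.

Definition subst_vars (A : Type) (n m : nat) (alpha : 'I_n -> word (A + 'I_n))
  (T : word (A + ('I_n + 'I_m))) : word (A + ('I_n + 'I_m)) :=
  fsub (fun c => match c with
                 | inl i => fsub (fun i' => [:: (inr (inl i'), false)]) (alpha i)
                 | inr j => [:: (inr (inr j), false)] end) T.

Lemma eval_subst_vars (A : eqType) n m alpha T (s : 'I_n -> word A) (t : 'I_m -> word A) :
  reduce (eval (Defs.pairmap s t) (subst_vars alpha T)) =
  reduce (eval (Defs.pairmap (fun i => eval s (alpha i)) t) T).
Proof.
rewrite eval_fsub; apply: eval_congr => -[i|j]; rewrite ?eval_var //.
by rewrite eval_fsub; apply: eval_congr => i'; rewrite eval_var.
Qed.

Lemma eval_lift_subst (A : eqType) n m (W : 'I_m -> word (A + 'I_n)) (s : 'I_n -> word A) T :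
  reduce (eval s (fsub (fun c => match c with
                               | inl i => [:: (inr i, false)]
                               | inr j => W j end) T)) =
  reduce (eval (Defs.pairmap s (fun j => eval s (W j))) T).
Proof. by rewrite eval_fsub; apply: eval_congr => -[i|j]; rewrite ?eval_var. Qed.

Section Retraction.
Variables (A : eqType) (n k : nat) (S : seq (word (A + 'I_n))).
Variables (g : 'I_k -> word (A + 'I_n)) (phi : A + 'I_n -> word (A + 'I_n)).
Hypothesis F_le_H : forall a : A, inH S g (cst _ a).
Hypothesis phi_retraction : is_retraction S g phi.

Let alpha i := phi (inr i).
Let U := retract_system S alpha.
Let retract_sol (s : 'I_n -> word A) i := eval s (alpha i).

Lemma eval_retraction_const s a :
  is_solution S s -> reduce (eval s (phi (inl a))) = [:: (a, false)].
Proof.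
case: phi_retraction => _ _ phi_id Hs.
by have := eqR_eval (phi_id _ (F_le_H a)) Hs; rewrite /cst wsubst1.
Qed.

Lemma eval_wsubst_retraction s w :
  is_solution S s -> reduce (eval s (wsubst phi w)) = reduce (eval s (fsub alpha w)).
Proof.
move=> Hs; rewrite /eval /fsub !wsubst_comp; apply: wsubst_congr => -[a|i] //.
exact: eval_retraction_const.
Qed.

Lemma eval_fsub_retraction_inH s h :
  is_solution S s -> inH S g h -> reduce (eval s (fsub alpha h)) = reduce (eval s h).
Proof.
case: phi_retraction => _ _ phi_id Hs Hh.
by rewrite -eval_wsubst_retraction //; exact: eqR_eval (phi_id _ Hh) Hs.
Qed.

Lemma retract_sol_solution s : is_solution S s -> is_solution U (retract_sol s).
Proof.
case: phi_retraction => phi_R phi_H _ Hs; apply/is_solution_retract_system; split.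
  move=> u uS; rewrite /retract_sol -eval_fsub -eval_wsubst_retraction //.
  exact: phi_R _ (inR_mem uS) _ Hs.
by move=> i; rewrite /retract_sol -eval_fsub eval_fsub_retraction_inH //; apply: phi_H.
Qed.

Lemma retract_system_solution s : is_solution U s -> is_solution S s.
Proof. by case/is_solution_retract_system. Qed.

Lemma eval_retract_system s w :
  is_solution U s -> reduce (eval s w) = reduce (eval (retract_sol s) w).
Proof. by case/is_solution_retract_system=> _ Hfix; apply: eval_congr. Qed.

Lemma retract_system_iso : F_iso_onto_H S g U alpha.
Proof.
have [phi_R phi_H _] := phi_retraction.
split=> [i | w Hw s Hs | w Hw s Hs | h Hh].
- exact: phi_H.
- by rewrite eval_fsub; apply: Hw (retract_sol_solution Hs).
- rewrite eval_retract_system // /retract_sol -eval_fsub.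
  exact: Hw (retract_system_solution Hs).
- by exists h; apply: eqR_of_eval => s Hs; apply: eval_fsub_retraction_inH.
Qed.

Lemma retract_system_lift_property : lift_property S -> lift_property U.
Proof.
move=> lift_S m T T_compat.
have T'_compat : compatible S (subst_vars alpha T).
  move=> s Hs; have [t Ht] := T_compat _ (retract_sol_solution Hs).
  by exists t; rewrite eval_subst_vars.
have [W HW] := lift_S _ _ T'_compat; exists W => s /is_solution_retract_system[HsS Hfix].
have := HW s HsS; rewrite eval_lift_subst eval_subst_vars eval_lift_subst => <-.
by apply: eval_congr => -[i|j] //=; apply: Hfix.
Qed.

End Retraction.

Theorem mainTheorem14 (A : eqType) (a1 a2 : A) (Hneq : a1 != a2)
  (n : nat) (S : seq (word (A + 'I_n))) (HS : lift_property S)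
  (k : nat) (g : 'I_k -> word (A + 'I_n))
  (HF : forall a : A, inH S g (cst _ a))
  (phi : A + 'I_n -> word (A + 'I_n)) (Hphi : is_retraction S g phi) :
  exists (l : nat) (U : seq (word (A + 'I_l))) (alpha : 'I_l -> word (A + 'I_n)),
    F_iso_onto_H S g U alpha /\ lift_property U.
Proof.
exists n, (retract_system S (fun i => phi (inr i))), (fun i => phi (inr i)).
split; first exact: retract_system_iso HF Hphi.
exact: retract_system_lift_property HF Hphi HS.
Qed.
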